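(* The set $\{G\in\mathcal G:\ \overline G\text{ is simple, not finitely generated and not locally finite}\}$ is comeager in $\mathcal G$.
   Context: Let $\mathbb N=\{1,2,3,\dots\}$. Equip $\mathbb N^{\mathbb N\times\mathbb N}$ with the product topology of the discrete topology on $\mathbb N$. Let $\mathcal G$ be the subspace consisting of those $A\in\mathbb N^{\mathbb N\times\mathbb N}$ that are the multiplication table of a group on the underlying set $\mathbb N$ whose identity element is $1$. For $G\in\mathcal G$, $\overline G$ denotes the group on $\mathbb N$ with multiplication table $G$. *)

(* Encoding convention: the underlying set N = {1,2,3,...}
   of the paper is represented by Rocq's [nat] via the bijection
   k : nat  <->  k+1 in N.  Hence a table A in N^(N x N) is a function
   [nat -> nat -> nat], and "identity element 1" becomes "identity element 0". *)
From Stdlib Require Import List.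

Definition table := nat -> nat -> nat.

(** Product topology of the discrete topology on N^(N x N):
    U is open iff membership in U is witnessed by a finite window
    (every finite set of coordinates lies in some [0,n) x [0,n)). *)
Definition agree_upto (n : nat) (A B : table) : Prop :=
  forall i j, i < n -> j < n -> A i j = B i j.

Definition is_open (U : table -> Prop) : Prop :=
  forall A, U A -> exists n, forall B, agree_upto n A B -> U B.

Definition is_group_table (A : table) : Prop :=
  (forall x y z, A (A x y) z = A x (A y z)) /\
  (forall x, A 0 x = x) /\
  (forall x, A x 0 = x) /\
  (forall x, exists y, A x y = 0 /\ A y x = 0).

Definition rel_open_in_G (D : table -> Prop) : Prop :=
  exists U, is_open U /\ forall A, is_group_table A -> (D A <-> U A).

Definition dense_in_G (D : table -> Prop) : Prop :=
  forall U, is_open U ->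
    (exists A, is_group_table A /\ U A) ->
    exists B, is_group_table B /\ U B /\ D B.

Definition comeager_in_G (P : table -> Prop) : Prop :=
  exists D : nat -> (table -> Prop),
    (forall n, rel_open_in_G (D n)) /\
    (forall n, dense_in_G (D n)) /\
    (forall A, is_group_table A -> (forall n, D n A) -> P A).

Definition subgroup (A : table) (S : nat -> Prop) : Prop :=
  S 0 /\
  (forall x y, S x -> S y -> S (A x y)) /\
  (forall x y, S x -> A x y = 0 -> S y).

Definition normal_subgroup (A : table) (S : nat -> Prop) : Prop :=
  subgroup A S /\
  (forall g h x, A g h = 0 -> S x -> S (A (A g x) h)).

Definition simple_group (A : table) : Prop :=
  (exists x, x <> 0) /\
  forall S, normal_subgroup A S ->
    (forall x, S x -> x = 0) \/ (forall x, S x).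

Definition generated (A : table) (s : list nat) (g : nat) : Prop :=
  forall S, subgroup A S -> (forall x, In x s -> S x) -> S g.

Definition finitely_generated (A : table) : Prop :=
  exists s : list nat, forall g, generated A s g.

Definition locally_finite (A : table) : Prop :=
  forall s : list nat, exists l : list nat,
    forall g, generated A s g -> In g l.

(* Each of the three properties follows from countably many conditions on the table, each
   witnessed by finitely many entries and hence open:
   - for every finite s there are g, h commuting with all of s but not with each other, so no
     finite s generates the group;
   - there are a, t with t a^2 t^-1 = a^3 such that t a t^-1 does not commute with a; this
     forces a to have infinite order, so the group is not locally finite;
   - for all x <> 1 and y, y is built from x by products, inverses and conjugations, which
     makes the group simple.
   Each condition is also dense.  A group G acts on G x Y by left multiplication; adding
   finitely many permutations of G x Y that realise the witnesses generates a countable group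
   of permutations containing G, and enumerating it compatibly with G on an initial segment of
   N gives a table that agrees with G on any prescribed finite window.  For simplicity take
   Y = Z: commutators of x with shears (b, l) |-> (b, l + d b), summed over an x-orbit when x
   has finite order, put the constant shear by 2 in the normal closure of x, and the commutator
   of that shear with the staircase (b, l) |-> (y^(l/2) b, l) is y. *)

From Stdlib Require Import List Arith Lia ZArith Cantor FinFun.
From Stdlib Require Import Classical ClassicalEpsilon ConstructiveEpsilon.
From Stdlib Require Import FunctionalExtensionality ProofIrrelevance.
Import ListNotations.

(** * Enumerating countable sets *)

Lemma injective_not_listed {X} (f : nat -> X) (l : list X) :
  Injective f -> ~ (forall k, In (f k) l).
Proof.
  intros Hf Hl.
  assert (H : length (map f (seq 0 (S (length l)))) <= length l).
  { apply NoDup_incl_length.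
    - apply Injective_map_NoDup; [exact Hf | apply seq_NoDup].
    - intros x Hx. apply in_map_iff in Hx as [k [<- _]]. apply Hl. }
  rewrite length_map, length_seq in H. lia.
Qed.

Definition enumerable {X} (P : X -> Prop) : Prop :=
  exists e : nat -> X, (forall n, P (e n)) /\ (forall x, P x -> exists n, e n = x).

Definition infinite {X} (P : X -> Prop) : Prop :=
  forall l : list X, exists x, P x /\ ~ In x l.

Section ExtendToBijection.

Variables (X : Type) (P : X -> Prop) (e : nat -> X) (phi : nat -> X) (N : nat).
Hypothesis e_in : forall n, P (e n).
Hypothesis e_onto : forall x, P x -> exists n, e n = x.
Hypothesis P_infinite : infinite P.
Hypothesis phi_in : forall i, i < N -> P (phi i).
Hypothesis phi_inj : forall i j, i < N -> j < N -> phi i = phi j -> i = j.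

Lemma enumeration_leaves_list (l : list X) : exists n, ~ In (e n) l.
Proof.
  destruct (P_infinite l) as [x [Px Hx]]. destruct (e_onto x Px) as [n <-]. eauto.
Qed.

Definition first_missing (l : list X) : nat :=
  proj1_sig (epsilon_smallest (fun n => ~ In (e n) l)
    (fun n => excluded_middle_informative _) (enumeration_leaves_list l)).

Lemma first_missing_spec (l : list X) :
  ~ In (e (first_missing l)) l /\ forall n, ~ In (e n) l -> first_missing l <= n.
Proof. unfold first_missing. destruct epsilon_smallest as [n Hn]. exact Hn. Qed.

Definition next_value (k : nat) (l : list X) : X :=
  if k <? N then phi k else e (first_missing l).

Fixpoint prefix (k : nat) : list X :=
  match k with 0 => [] | S k => prefix k ++ [next_value k (prefix k)] end.

Definition extension (k : nat) : X := next_value k (prefix k).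

Lemma extension_in_prefix i k : i < k -> In (extension i) (prefix k).
Proof.
  induction k as [|k IH]; intros Hi; [lia|]. simpl. apply in_or_app.
  destruct (Nat.eq_dec i k) as [->|Hne]; [right; left; reflexivity|left; apply IH; lia].
Qed.

Lemma prefix_inv x k : In x (prefix k) -> exists i, i < k /\ extension i = x.
Proof.
  induction k as [|k IH]; simpl; [tauto|].
  intros [H|[<-|[]]]%in_app_or.
  - destruct (IH H) as [i [Hi Hx]]. exists i. split; [lia|exact Hx].
  - exists k. split; [lia|reflexivity].
Qed.

Lemma extension_below k : k < N -> extension k = phi k.
Proof. intros Hk. unfold extension, next_value. now rewrite (proj2 (Nat.ltb_lt _ _) Hk). Qed.

Lemma extension_fresh k : ~ In (extension k) (prefix k).
Proof.
  destruct (Nat.ltb_spec k N) as [Hk|Hk].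
  - intros [i [Hi E]]%prefix_inv.
    rewrite !extension_below in E by lia. apply phi_inj in E; lia.
  - unfold extension, next_value. rewrite (proj2 (Nat.ltb_ge _ _) Hk).
    apply first_missing_spec.
Qed.

Lemma extension_injective : Injective extension.
Proof.
  intros i j E. destruct (lt_eq_lt_dec i j) as [[H|H]|H]; [exfalso| exact H |exfalso].
  - apply (extension_fresh j). rewrite <- E. now apply extension_in_prefix.
  - apply (extension_fresh i). rewrite E. now apply extension_in_prefix.
Qed.

Lemma extension_in k : P (extension k).
Proof. unfold extension, next_value. destruct (Nat.ltb_spec k N); auto. Qed.

Lemma enumeration_in_prefix n : In (e n) (prefix (N + S n)).
Proof.
  induction n as [n IH] using lt_wf_ind.
  rewrite Nat.add_succ_r. simpl. apply in_or_app.
  destruct (classic (In (e n) (prefix (N + n)))) as [Hin|Hout]; [left; exact Hin|].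
  right; left. unfold next_value. rewrite (proj2 (Nat.ltb_ge _ _)) by lia.
  destruct (first_missing_spec (prefix (N + n))) as [Hm Hleast].
  f_equal. apply Nat.le_antisymm; [now apply Hleast|].
  apply Nat.nlt_ge. intros Hlt. apply Hm.
  destruct (prefix_inv _ _ (IH _ Hlt)) as [i [Hi <-]].
  apply extension_in_prefix. lia.
Qed.

Lemma extension_onto x : P x -> exists k, extension k = x.
Proof.
  intros Hx. destruct (e_onto x Hx) as [n <-].
  destruct (prefix_inv _ _ (enumeration_in_prefix n)) as [k [_ Hk]]. eauto.
Qed.

End ExtendToBijection.

Lemma extend_to_bijection {X} (P : X -> Prop) (phi : nat -> X) (N : nat) :
  enumerable P -> infinite P ->
  (forall i, i < N -> P (phi i)) ->
  (forall i j, i < N -> j < N -> phi i = phi j -> i = j) ->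
  exists b : nat -> X, Injective b /\ (forall k, P (b k)) /\
    (forall x, P x -> exists k, b k = x) /\ (forall k, k < N -> b k = phi k).
Proof.
  intros [e [e_in e_onto]] Pinf phi_in phi_inj.
  exists (extension X P e phi N e_onto Pinf). split; [|split; [|split]].
  - apply extension_injective; assumption.
  - apply extension_in; assumption.
  - apply extension_onto; assumption.
  - apply extension_below.
Qed.

Lemma le_list_max a l : In a l -> a <= list_max l.
Proof.
  intros H. pose proof (proj1 (list_max_le l _) (le_n _)) as Hall.
  rewrite Forall_forall in Hall. auto.
Qed.

Fixpoint encode_list (l : list nat) : nat :=
  match l with [] => 0 | a :: l => S (to_nat (a, encode_list l)) end.

Fixpoint decode_list_fuel (fuel n : nat) : list nat :=
  match fuel, n with
  | S fuel, S n => let (a, c) := of_nat n in a :: decode_list_fuel fuel c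
  | _, _ => []
  end.

Definition decode_list (n : nat) : list nat := decode_list_fuel n n.

Lemma decode_list_fuel_encode fuel l :
  encode_list l <= fuel -> decode_list_fuel fuel (encode_list l) = l.
Proof.
  revert fuel. induction l as [|a l IH]; intros [|fuel] Hfuel;
    cbn [encode_list decode_list_fuel] in *; try easy.
  rewrite cancel_of_to. f_equal. apply IH.
  pose proof (to_nat_non_decreasing a (encode_list l)). lia.
Qed.

Lemma decode_list_onto l : exists n, decode_list n = l.
Proof. exists (encode_list l). now apply decode_list_fuel_encode. Qed.

(** * Permutation groups *)

Record perm (X : Type) := Perm {
  fwd :> X -> X;
  bwd : X -> X;
  fwd_bwd : forall x, fwd (bwd x) = x;
  bwd_fwd : forall x, bwd (fwd x) = x }.
Arguments Perm {X}.
Arguments fwd {X}.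
Arguments bwd {X}.
Arguments fwd_bwd {X}.
Arguments bwd_fwd {X}.

Section Permutations.

Variable X : Type.
Implicit Types p q r : perm X.

Lemma perm_ext p q : (forall x, p x = q x) -> p = q.
Proof.
  destruct p as [f g fg gf], q as [f' g' fg' gf']; simpl; intros H.
  assert (f = f') as <- by (apply functional_extensionality; exact H).
  assert (g = g') as <-.
  { apply functional_extensionality; intros x. rewrite <- (fg' x) at 1. now rewrite gf. }
  f_equal; apply proof_irrelevance.
Qed.

Definition pid : perm X := Perm (fun x => x) (fun x => x) (fun _ => eq_refl) (fun _ => eq_refl).

Definition pcomp p q : perm X.
Proof.
  refine (Perm (fun x => p (q x)) (fun x => bwd q (bwd p x)) _ _); intros x.
  - now rewrite !fwd_bwd.
  - now rewrite !bwd_fwd.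
Defined.

Definition pinv p : perm X := Perm (bwd p) (fwd p) (bwd_fwd p) (fwd_bwd p).

Definition pconj g p : perm X := pcomp g (pcomp p (pinv g)).

Lemma pcomp_assoc p q r : pcomp p (pcomp q r) = pcomp (pcomp p q) r.
Proof. now apply perm_ext. Qed.

Lemma pcomp_pid_l p : pcomp pid p = p.
Proof. now apply perm_ext. Qed.

Lemma pcomp_pid_r p : pcomp p pid = p.
Proof. now apply perm_ext. Qed.

Lemma pcomp_pinv_r p : pcomp p (pinv p) = pid.
Proof. apply perm_ext, fwd_bwd. Qed.

Lemma pcomp_pinv_l p : pcomp (pinv p) p = pid.
Proof. apply perm_ext, bwd_fwd. Qed.

Lemma pinv_pinv p : pinv (pinv p) = p.
Proof. now apply perm_ext. Qed.

Lemma pinv_pcomp p q : pinv (pcomp p q) = pcomp (pinv q) (pinv p).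
Proof. now apply perm_ext. Qed.

Inductive perm_gen (S : perm X -> Prop) : perm X -> Prop :=
| gen_base p : S p -> perm_gen S p
| gen_id : perm_gen S pid
| gen_comp p q : perm_gen S p -> perm_gen S q -> perm_gen S (pcomp p q)
| gen_inv p : perm_gen S p -> perm_gen S (pinv p).

Lemma perm_gen_mono (S S' : perm X -> Prop) p :
  (forall q, S q -> S' q) -> perm_gen S p -> perm_gen S' p.
Proof.
  intros HS. induction 1.
  - apply gen_base, HS. assumption.
  - apply gen_id.
  - apply gen_comp; assumption.
  - apply gen_inv; assumption.
Qed.

End Permutations.

Arguments pid {X}.
Arguments pcomp {X}.
Arguments pinv {X}.
Arguments pconj {X}.
Arguments perm_gen {X}.
Arguments gen_base {X S}.
Arguments gen_id {X S}.
Arguments gen_comp {X S}.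
Arguments gen_inv {X S}.

Section Words.

Variables (X : Type) (S : perm X -> Prop) (g : nat -> perm X).
Hypothesis g_in : forall n, S (g n).
Hypothesis g_onto : forall p, S p -> exists n, g n = p.

Definition letter (n : nat) : perm X :=
  let (i, sign) := of_nat n in if sign =? 0 then g i else pinv (g i).

Definition word_value (w : list nat) : perm X :=
  fold_right (fun a p => pcomp (letter a) p) pid w.

Lemma word_value_app w w' : word_value (w ++ w') = pcomp (word_value w) (word_value w').
Proof.
  induction w as [|a w IH]; simpl.
  - now rewrite pcomp_pid_l.
  - now rewrite IH, pcomp_assoc.
Qed.

Lemma letter_pinv a : exists a', letter a' = pinv (letter a).
Proof.
  unfold letter. destruct (of_nat a) as [i sign].
  destruct (sign =? 0).
  - exists (to_nat (i, 1)). now rewrite cancel_of_to.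
  - exists (to_nat (i, 0)). rewrite cancel_of_to. now rewrite pinv_pinv.
Qed.

Lemma word_value_pinv w : exists w', word_value w' = pinv (word_value w).
Proof.
  induction w as [|a w [w' IH]]; simpl.
  - exists []. now apply perm_ext.
  - destruct (letter_pinv a) as [a' Ha']. exists (w' ++ [a']).
    rewrite word_value_app, IH, pinv_pcomp, <- Ha'. simpl. now rewrite pcomp_pid_r.
Qed.

Lemma word_value_gen w : perm_gen S (word_value w).
Proof.
  induction w as [|a w IH]; simpl; [apply gen_id|].
  apply gen_comp; [|exact IH]. unfold letter. destruct (of_nat a) as [i sign].
  destruct (sign =? 0); [|apply gen_inv]; apply gen_base, g_in.
Qed.

Lemma perm_gen_word p : perm_gen S p -> exists w, word_value w = p.
Proof.
  induction 1 as [p Hp| |p q _ [w <-] _ [w' <-]|p _ [w <-]].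
  - destruct (g_onto p Hp) as [i <-]. exists [to_nat (i, 0)].
    unfold word_value, letter; cbn [fold_right]. rewrite cancel_of_to. apply pcomp_pid_r.
  - now exists [].
  - exists (w ++ w'). apply word_value_app.
  - apply word_value_pinv.
Qed.

End Words.

Lemma enumerable_perm_gen {X} (S : perm X -> Prop) :
  enumerable S -> enumerable (perm_gen S).
Proof.
  intros [g [g_in g_onto]].
  exists (fun n => word_value X g (decode_list n)). split.
  - intros n. now apply word_value_gen.
  - intros p Hp. destruct (perm_gen_word X S g g_onto p Hp) as [w <-].
    destruct (decode_list_onto w) as [n <-]. now exists n.
Qed.

Inductive pnormal_closure {X} (S : perm X -> Prop) (u : perm X) : perm X -> Prop :=
| pnc_base : pnormal_closure S u u
| pnc_id : pnormal_closure S u pid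
| pnc_comp p q : pnormal_closure S u p -> pnormal_closure S u q -> pnormal_closure S u (pcomp p q)
| pnc_inv p : pnormal_closure S u p -> pnormal_closure S u (pinv p)
| pnc_conj g p : perm_gen S g -> pnormal_closure S u p -> pnormal_closure S u (pconj g p).

Section PermNormalClosure.

Variables (X : Type) (S : perm X -> Prop) (u : perm X).

Lemma pnormal_closure_gen p : perm_gen S u -> pnormal_closure S u p -> perm_gen S p.
Proof.
  intros Hu. induction 1; unfold pconj;
    repeat (apply gen_comp || apply gen_inv); auto using gen_id.
Qed.

Lemma pnormal_closure_mono (S' : perm X -> Prop) p :
  (forall q, S q -> S' q) -> pnormal_closure S u p -> pnormal_closure S' u p.
Proof.
  intros HS. induction 1; [apply pnc_base|apply pnc_id|apply pnc_comp|apply pnc_inv|apply pnc_conj];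
    eauto using perm_gen_mono.
Qed.

Lemma commutator_in_pnormal_closure g p :
  perm_gen S g -> pnormal_closure S u p -> pnormal_closure S u (pcomp (pconj g p) (pinv p)).
Proof. intros Hg Hp. apply pnc_comp; [apply pnc_conj|apply pnc_inv]; assumption. Qed.

End PermNormalClosure.

(** * Group tables from countable permutation groups *)

Definition perm_hom {X} (A : table) (phi : nat -> perm X) : Prop :=
  forall i j, phi (A i j) = pcomp (phi i) (phi j).

Lemma group_table_of_bijection {X} (G : perm X -> Prop) (beta : nat -> perm X) :
  Injective beta -> beta 0 = pid ->
  (forall i, G (beta i)) -> (forall p, G p -> exists i, beta i = p) ->
  (forall p q, G p -> G q -> G (pcomp p q)) -> (forall p, G p -> G (pinv p)) ->
  exists B, is_group_table B /\ perm_hom B beta.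
Proof.
  intros Hinj H0 Hin Honto Hcomp Hinv.
  set (B := fun i j => epsilon (inhabits 0) (fun k => beta k = pcomp (beta i) (beta j))).
  assert (HB : perm_hom B beta).
  { intros i j. unfold B. apply epsilon_spec, Honto, Hcomp; apply Hin. }
  exists B. split; [|exact HB]. repeat split.
  - intros x y z. apply Hinj. rewrite !HB. symmetry. apply pcomp_assoc.
  - intros x. apply Hinj. rewrite HB, H0. apply pcomp_pid_l.
  - intros x. apply Hinj. rewrite HB, H0. apply pcomp_pid_r.
  - intros x. destruct (Honto (pinv (beta x))) as [y Hy]; [apply Hinv, Hin|].
    exists y. split; apply Hinj; rewrite HB, H0, Hy;
      [apply pcomp_pinv_r|apply pcomp_pinv_l].
Qed.

Definition generators {X} (phi : nat -> perm X) (E : list (perm X)) (p : perm X) : Prop :=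
  (exists i, phi i = p) \/ In p E.

Lemma enumerable_generators {X} (phi : nat -> perm X) E : enumerable (generators phi E).
Proof.
  exists (fun n => if n <? length E then nth n E pid else phi (n - length E)). split.
  - intros n. destruct (Nat.ltb_spec n (length E)).
    + right. now apply nth_In.
    + left. eauto.
  - intros p [[i <-]|Hp].
    + exists (length E + i). rewrite (proj2 (Nat.ltb_ge _ _)) by lia. f_equal. lia.
    + destruct (In_nth E p pid Hp) as [n [Hn <-]]. exists n.
      now rewrite (proj2 (Nat.ltb_lt _ _) Hn).
Qed.

Lemma table_entries_bounded (A : table) n :
  exists M, forall i j, i < n -> j < n -> A i j < M.
Proof.
  set (l := flat_map (fun i => map (A i) (seq 0 n)) (seq 0 n)).
  exists (S (list_max l)). intros i j Hi Hj.
  enough (A i j <= list_max l) by lia.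
  apply le_list_max, in_flat_map. exists i. split; [|apply in_map]; apply in_seq; lia.
Qed.

Lemma extend_by_perms {X} (A : table) (phi : nat -> perm X) (E : list (perm X)) (n N : nat) :
  perm_hom A phi -> Injective phi -> phi 0 = pid ->
  exists (B : table) (beta : nat -> perm X),
    is_group_table B /\ agree_upto n A B /\ perm_hom B beta /\ Injective beta /\
    (forall p, perm_gen (generators phi E) p -> exists i, beta i = p) /\
    (forall i, perm_gen (generators phi E) (beta i)) /\
    (forall i, i < N -> beta i = phi i).
Proof.
  intros Hhom Hinj H0.
  set (G := perm_gen (generators phi E)).
  assert (phi_in : forall i, G (phi i)) by (intros i; apply gen_base; left; eauto).
  assert (G_infinite : infinite G).
  { intros l. apply NNPP. intros Hl. apply (injective_not_listed phi l Hinj).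
    intros k. apply NNPP. intros Hk. apply Hl. eauto. }
  (* beta copies phi below a bound for n and for all A i j with i, j < n, so B agrees with A
     on the window. *)
  destruct (table_entries_bounded A n) as [M HM].
  destruct (extend_to_bijection G phi (S (N + n + M))) as [beta [Hbinj [Hbin [Hbonto Hbphi]]]].
  - apply enumerable_perm_gen, enumerable_generators.
  - exact G_infinite.
  - intros i _. apply phi_in.
  - intros i j _ _. apply Hinj.
  - assert (Hb0 : beta 0 = pid) by (rewrite Hbphi by lia; exact H0).
    destruct (group_table_of_bijection G beta Hbinj Hb0 Hbin Hbonto) as [B [HB Hbhom]].
    { intros p q. apply gen_comp. }
    { intros p. apply gen_inv. }
    exists B, beta.
    refine (conj HB (conj _ (conj Hbhom (conj Hbinj (conj Hbonto (conj Hbin _)))))).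
    + intros i j Hi Hj. apply Hbinj.
      specialize (HM i j Hi Hj). rewrite Hbhom, !Hbphi, Hhom by lia. reflexivity.
    + intros i Hi. apply Hbphi. lia.
Qed.

(** * The generic properties and their openness *)

Lemma agree_upto_entry n A B i j : agree_upto n A B -> i < n -> j < n -> B i j = A i j.
Proof. intros H Hi Hj. symmetry. now apply H. Qed.

Definition noncommuting_centralizer (s : list nat) (A : table) : Prop :=
  exists g h, (forall a, In a s -> A g a = A a g /\ A h a = A a h) /\ A g h <> A h g.

Definition bs_witness (A : table) : Prop :=
  exists a t t', A t t' = 0 /\ A t' t = 0 /\ A (A t (A a a)) t' = A a (A a a) /\
    A (A (A t a) t') a <> A a (A (A t a) t').

Inductive in_normal_closure (A : table) (x : nat) : nat -> Prop :=
| nc_base : in_normal_closure A x x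
| nc_one : in_normal_closure A x 0
| nc_mul a b : in_normal_closure A x a -> in_normal_closure A x b -> in_normal_closure A x (A a b)
| nc_inv a a' : in_normal_closure A x a -> A a a' = 0 -> in_normal_closure A x a'
| nc_conj a g g' :
    in_normal_closure A x a -> A g g' = 0 -> in_normal_closure A x (A (A g a) g').

Definition trivial_or_normally_generates (x y : nat) (A : table) : Prop :=
  x = 0 \/ in_normal_closure A x y.

Lemma noncommuting_centralizer_open s : is_open (noncommuting_centralizer s).
Proof.
  intros A [g [h [Hs Hgh]]]. exists (S (g + h + list_max s)). intros B HB.
  exists g, h. rewrite !(agree_upto_entry _ _ _ g h HB), !(agree_upto_entry _ _ _ h g HB) by lia.
  split; [|exact Hgh].
  intros a Ha. pose proof (le_list_max a s Ha).
  rewrite !(agree_upto_entry _ _ _ _ _ HB) by lia. now apply Hs.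
Qed.

Lemma bs_witness_open : is_open bs_witness.
Proof.
  intros A [a [t [t' H]]].
  set (n := S (a + t + t' + A a a + A t (A a a) + A t a + A (A t a) t')).
  exists n. intros B HB. exists a, t, t'.
  assert (E : forall i j, i < n -> j < n -> B i j = A i j)
    by (intros i j; now apply agree_upto_entry).
  rewrite (E t t'), (E t' t), (E a a), (E t (A a a)), (E (A t (A a a)) t'), (E a (A a a)),
    (E t a), (E (A t a) t'), (E (A (A t a) t') a), (E a (A (A t a) t')) by (unfold n; lia).
  exact H.
Qed.

Lemma in_normal_closure_stable A x y :
  in_normal_closure A x y -> exists n, forall B, agree_upto n A B -> in_normal_closure B x y.
Proof.
  induction 1 as [| |a b _ [n1 H1] _ [n2 H2]|a a' _ [n1 H1] Ha|a g g' _ [n1 H1] Hg].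
  - exists 0. intros. apply nc_base.
  - exists 0. intros. apply nc_one.
  - exists (S (n1 + n2 + a + b)). intros B HB.
    rewrite <- (agree_upto_entry _ _ _ a b HB) by lia.
    apply nc_mul; [apply H1|apply H2]; intros i j ? ?; apply HB; lia.
  - exists (S (n1 + a + a')). intros B HB. apply (nc_inv B x a).
    + apply H1. intros i j ? ?. apply HB; lia.
    + now rewrite (agree_upto_entry _ _ _ a a' HB) by lia.
  - exists (S (n1 + a + g + g' + A g a)). intros B HB.
    rewrite <- (agree_upto_entry _ _ _ (A g a) g' HB), <- (agree_upto_entry _ _ _ g a HB) by lia.
    apply nc_conj.
    + apply H1. intros i j ? ?. apply HB; lia.
    + now rewrite (agree_upto_entry _ _ _ g g' HB) by lia.
Qed.

Lemma trivial_or_normally_generates_open x y : is_open (trivial_or_normally_generates x y).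
Proof.
  intros A [Hx|Hy]; [exists 0; intros; now left|].
  destruct (in_normal_closure_stable A x y Hy) as [n Hn]. exists n. intros. right. auto.
Qed.

Lemma simple_of_normal_closures A :
  (forall x y, trivial_or_normally_generates x y A) -> simple_group A.
Proof.
  intros H. split; [now exists 1|].
  intros S [[HS0 [HSmul HSinv]] HSconj].
  destruct (classic (exists x, S x /\ x <> 0)) as [[x [Sx Hx]]|Htriv].
  - right. intros y. destruct (H x y) as [E|Hxy]; [contradiction|].
    induction Hxy; eauto.
  - left. intros x Sx. apply NNPP. intros Hx. apply Htriv. eauto.
Qed.

Lemma pnormal_closure_pullback {X} (B : table) (beta : nat -> perm X) (S : perm X -> Prop) x :
  perm_hom B beta -> Injective beta -> beta 0 = pid ->
  (forall p, perm_gen S p -> exists i, beta i = p) -> perm_gen S (beta x) ->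
  forall p, pnormal_closure S (beta x) p -> forall i, beta i = p -> in_normal_closure B x i.
Proof.
  intros Hhom Hinj H0 Honto Hx p Hp.
  assert (Hgen : forall q, pnormal_closure S (beta x) q -> exists i, beta i = q)
    by (intros q Hq; apply Honto, (pnormal_closure_gen _ _ _ _ Hx Hq)).
  induction Hp as [| |p q Hp IHp Hq IHq|p Hp IHp|g p Hg Hp IHp]; intros i Hi.
  - apply Hinj in Hi as ->. apply nc_base.
  - rewrite <- H0 in Hi. apply Hinj in Hi as ->. apply nc_one.
  - destruct (Hgen p Hp) as [i1 H1], (Hgen q Hq) as [i2 H2].
    replace i with (B i1 i2) by (apply Hinj; now rewrite Hhom, H1, H2).
    apply nc_mul; auto.
  - destruct (Hgen p Hp) as [i1 H1]. apply (nc_inv B x i1); [now apply IHp|].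
    apply Hinj. rewrite Hhom, H1, Hi, H0. apply pcomp_pinv_r.
  - destruct (Hgen p Hp) as [ip H1]. destruct (Honto g Hg) as [ig H2].
    destruct (Honto (pinv g) (gen_inv _ Hg)) as [ig' H3].
    replace i with (B (B ig ip) ig')
      by (apply Hinj; rewrite !Hhom, H1, H2, H3, Hi; symmetry; apply pcomp_assoc).
    apply nc_conj; [now apply IHp|].
    apply Hinj. rewrite Hhom, H2, H3, H0. apply pcomp_pinv_r.
Qed.

(** * Shears of N x Z and periodic sums *)

Definition shear (d : nat -> Z) : perm (nat * Z).
Proof.
  refine (Perm (fun w => (fst w, snd w + d (fst w))%Z) (fun w => (fst w, snd w - d (fst w))%Z) _ _);
    intros [b l]; simpl; f_equal; lia.
Defined.

Lemma shear_ext d1 d2 : (forall b, d1 b = d2 b) -> shear d1 = shear d2.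
Proof. intros H. apply perm_ext. intros [b l]. simpl. now rewrite H. Qed.

Lemma shear_pcomp d1 d2 : pcomp (shear d1) (shear d2) = shear (fun b => d1 b + d2 b)%Z.
Proof. apply perm_ext. intros [b l]. simpl. f_equal. lia. Qed.

Lemma shear_zero : shear (fun _ => 0%Z) = pid.
Proof. apply perm_ext. intros [b l]. simpl. f_equal. lia. Qed.

Definition sign_flip (s : nat -> bool) : perm (nat * Z).
Proof.
  refine (Perm (fun w => (fst w, if s (fst w) then - snd w else snd w)%Z)
               (fun w => (fst w, if s (fst w) then - snd w else snd w)%Z) _ _);
    intros [b l]; simpl; f_equal; destruct (s b); lia.
Defined.

Lemma sign_flip_conj_shear s d :
  pconj (sign_flip s) (shear d) = shear (fun b => if s b then - d b else d b)%Z.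
Proof. apply perm_ext. intros [b l]. simpl. f_equal. destruct (s b); lia. Qed.

Fixpoint zsum (f : nat -> Z) (n : nat) : Z :=
  match n with 0 => 0%Z | S n => (zsum f n + f n)%Z end.

Lemma zsum_ext f g n : (forall j, j < n -> f j = g j) -> zsum f n = zsum g n.
Proof. induction n as [|n IH]; simpl; intros H; [reflexivity|]. rewrite IH, H; auto. Qed.

Lemma zsum_shift f n : zsum (fun j => f (S j)) n = (zsum f n - f O + f n)%Z.
Proof. induction n as [|n IH]; simpl; lia. Qed.

Lemma zsum_periodic (f : nat -> Z) (m T : nat) :
  (forall k, f (k + m) = f k) -> zsum (fun j => f (T + j)) m = zsum f m.
Proof.
  intros Hper. induction T as [|T IH]; [reflexivity|].
  rewrite <- IH, (zsum_ext _ (fun j => f (T + S j))) by (intros; f_equal; lia).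
  rewrite (zsum_shift (fun j => f (T + j))), Nat.add_0_r, Hper. lia.
Qed.

Lemma indicator_window_sum (m : nat) (T : Z) : 2 <= m -> (0 <= T)%Z ->
  zsum (fun j => if ((T + Z.of_nat j) mod Z.of_nat m <=? 1)%Z then 1%Z else 0%Z) m = 2%Z.
Proof.
  intros Hm HT.
  set (f := fun k => if (Z.of_nat k mod Z.of_nat m <=? 1)%Z then 1%Z else 0%Z).
  rewrite (zsum_ext _ (fun j => f (Z.to_nat T + j)))
    by (intros j _; unfold f; now rewrite Nat2Z.inj_add, Z2Nat.id).
  rewrite zsum_periodic.
  2:{ intros k. unfold f. now rewrite Nat2Z.inj_add, <- (Z.mul_1_l (Z.of_nat m)) at 1;
        rewrite Z_mod_plus_full. }
  rewrite (zsum_ext _ (fun j => if (Z.of_nat j <=? 1)%Z then 1%Z else 0%Z))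
    by (intros j Hj; unfold f; now rewrite Z.mod_small by lia).
  replace m with (m - 2 + 2) by lia. induction (m - 2) as [|k IH]; [reflexivity|].
  rewrite Nat.add_succ_l. simpl zsum. rewrite IH.
  destruct (Z.leb_spec (Z.of_nat (k + 2)) 1); lia.
Qed.

Section GroupTable.

Variable A : table.
Hypothesis HA : is_group_table A.

Lemma mul_assoc x y z : A (A x y) z = A x (A y z).
Proof. apply (proj1 HA). Qed.

Lemma mul_0l x : A 0 x = x.
Proof. apply (proj1 (proj2 HA)). Qed.

Lemma mul_0r x : A x 0 = x.
Proof. apply (proj1 (proj2 (proj2 HA))). Qed.

Definition ginv (x : nat) : nat := epsilon (inhabits 0) (fun y => A x y = 0 /\ A y x = 0).

Lemma ginv_spec x : A x (ginv x) = 0 /\ A (ginv x) x = 0.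
Proof. unfold ginv. apply epsilon_spec, (proj2 (proj2 (proj2 HA))). Qed.

Lemma mul_ginv_cancel_l x y : A x (A (ginv x) y) = y.
Proof. now rewrite <- mul_assoc, (proj1 (ginv_spec x)), mul_0l. Qed.

Lemma mul_ginv_cancel_r x y : A (ginv x) (A x y) = y.
Proof. now rewrite <- mul_assoc, (proj2 (ginv_spec x)), mul_0l. Qed.

Lemma mul_cancel_l a b c : A a b = A a c -> b = c.
Proof. intros H. now rewrite <- (mul_ginv_cancel_r a b), H, mul_ginv_cancel_r. Qed.

Lemma mul_cancel_r a b c : A b a = A c a -> b = c.
Proof.
  intros H. rewrite <- (mul_0r b), <- (mul_0r c), <- (proj1 (ginv_spec a)), <- !mul_assoc.
  now rewrite H.
Qed.

Fixpoint gpow (a : nat) (k : nat) : nat :=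
  match k with 0 => 0 | S k => A a (gpow a k) end.

Lemma gpow_add a i j : gpow a (i + j) = A (gpow a i) (gpow a j).
Proof.
  induction i as [|i IH]; simpl; [now rewrite mul_0l|]. now rewrite IH, mul_assoc.
Qed.

Lemma gpow_mul a i j : gpow a (i * j) = gpow (gpow a i) j.
Proof.
  induction j as [|j IH]; simpl; [now rewrite Nat.mul_0_r|].
  now rewrite Nat.mul_succ_r, Nat.add_comm, gpow_add, IH.
Qed.

Lemma gpow_1 a : gpow a 1 = a.
Proof. apply mul_0r. Qed.

Lemma gpow_eq_order a i j : i < j -> gpow a i = gpow a j -> gpow a (j - i) = 0.
Proof.
  intros Hij H. apply (mul_cancel_l (gpow a i)).
  now rewrite <- gpow_add, mul_0r, Nat.add_comm, Nat.sub_add by lia.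
Qed.

Definition zpow (a : nat) (n : Z) : nat :=
  if (0 <=? n)%Z then gpow a (Z.to_nat n) else gpow (ginv a) (Z.to_nat (- n)).

Lemma zpow_of_nat a k : zpow a (Z.of_nat k) = gpow a k.
Proof. unfold zpow. rewrite (proj2 (Z.leb_le _ _)) by lia. now rewrite Nat2Z.id. Qed.

Lemma zpow_succ a n : zpow a (n + 1) = A a (zpow a n).
Proof.
  unfold zpow. destruct (Z.leb_spec 0 n); destruct (Z.leb_spec 0 (n + 1)); try lia.
  - now replace (Z.to_nat (n + 1)) with (S (Z.to_nat n)) by lia.
  - replace (Z.to_nat (- n)) with 1 by lia. replace (Z.to_nat (n + 1)) with 0 by lia.
    simpl. now rewrite mul_0r, (proj1 (ginv_spec a)).
  - replace (Z.to_nat (- n)) with (S (Z.to_nat (- (n + 1)))) by lia. simpl.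
    now rewrite mul_ginv_cancel_l.
Qed.

Lemma zpow_pred a n : zpow a (n - 1) = A (ginv a) (zpow a n).
Proof.
  replace n with (n - 1 + 1)%Z at 2 by lia. now rewrite zpow_succ, mul_ginv_cancel_r.
Qed.

Lemma zpow_add a n m : zpow a (n + m) = A (zpow a n) (zpow a m).
Proof.
  induction n as [|n IH|n IH] using Z.peano_ind.
  - simpl. now rewrite mul_0l.
  - replace (Z.succ n + m)%Z with (n + m + 1)%Z by lia. rewrite <- Z.add_1_r.
    now rewrite !zpow_succ, IH, mul_assoc.
  - replace (Z.pred n + m)%Z with (n + m - 1)%Z by lia. rewrite <- Z.sub_1_r.
    now rewrite !zpow_pred, IH, mul_assoc.
Qed.

Lemma zpow_1 a : zpow a 1 = a.
Proof. apply gpow_1. Qed.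

Lemma zpow_succ_r a n : zpow a (n + 1) = A (zpow a n) a.
Proof. now rewrite zpow_add, zpow_1. Qed.

Lemma zpow_opp_l a n : A (zpow a (- n)) (zpow a n) = 0.
Proof. now rewrite <- zpow_add, Z.add_opp_diag_l. Qed.

Definition rho {Y} (a : nat) : perm (nat * Y).
Proof.
  refine (Perm (fun w => (A a (fst w), snd w)) (fun w => (A (ginv a) (fst w), snd w)) _ _);
    intros [b y]; simpl; f_equal; [apply mul_ginv_cancel_l|apply mul_ginv_cancel_r].
Defined.

Lemma rho_hom {Y} : perm_hom A (@rho Y).
Proof. intros a b. apply perm_ext. intros [c y]. simpl. now rewrite mul_assoc. Qed.

Lemma rho_0 {Y} : @rho Y 0 = pid.
Proof. apply perm_ext. intros [c y]. simpl. now rewrite mul_0l. Qed.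

Lemma rho_injective {Y} (y0 : Y) : Injective (@rho Y).
Proof.
  intros a b H. apply (f_equal (fun p => fst (fwd p (0, y0)))) in H. simpl in H.
  now rewrite !mul_0r in H.
Qed.

Lemma centralizer_subgroup g : subgroup A (fun z => A g z = A z g).
Proof.
  split; [|split].
  - now rewrite mul_0l, mul_0r.
  - intros z w Hz Hw. now rewrite <- mul_assoc, Hz, mul_assoc, Hw, mul_assoc.
  - intros z w Hz Hzw. apply (mul_cancel_l z).
    rewrite <- !mul_assoc, <- Hz, (mul_assoc g z w), Hzw. now rewrite mul_0r, mul_0l.
Qed.

Lemma noncommuting_centralizer_not_generated s :
  noncommuting_centralizer s A -> ~ (forall z, generated A s z).
Proof.
  intros [g [h [Hs Hgh]]] Hgen. apply Hgh.
  apply (Hgen h _ (centralizer_subgroup g)). intros a Ha. now apply Hs.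
Qed.

Lemma gpow_generated a s k : In a s -> generated A s (gpow a k).
Proof.
  intros Ha S [H0 [Hmul _]] Hs. induction k as [|k IH]; simpl; auto.
Qed.

Lemma locally_finite_torsion a : locally_finite A -> exists m, 1 <= m /\ gpow a m = 0.
Proof.
  intros Hlf. destruct (Hlf [a]) as [l Hl].
  destruct (classic (Injective (gpow a))) as [Hinj|Hninj].
  - exfalso. apply (injective_not_listed _ l Hinj). intros k.
    apply Hl, gpow_generated. now left.
  - apply NNPP. intros Hnone. apply Hninj. intros i j Hij.
    destruct (lt_eq_lt_dec i j) as [[H|H]|H]; [exfalso| exact H |exfalso]; apply Hnone.
    + exists (j - i). split; [lia|]. now apply gpow_eq_order.
    + exists (i - j). split; [lia|]. now apply gpow_eq_order.
Qed.

Definition conj_by (t t' w : nat) : nat := A (A t w) t'.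

Lemma conj_by_mul t t' u v :
  A t' t = 0 -> conj_by t t' (A u v) = A (conj_by t t' u) (conj_by t t' v).
Proof.
  intros H. unfold conj_by. rewrite !mul_assoc. do 2 f_equal.
  now rewrite <- (mul_assoc t' t), H, mul_0l.
Qed.

Lemma conj_by_gpow t t' w k : A t t' = 0 -> A t' t = 0 ->
  conj_by t t' (gpow w k) = gpow (conj_by t t' w) k.
Proof.
  intros H1 H2. induction k as [|k IH]; simpl.
  - unfold conj_by. now rewrite mul_0r.
  - now rewrite conj_by_mul, IH.
Qed.

Lemma bs_witness_infinite_order : bs_witness A -> exists a, forall m, 1 <= m -> gpow a m <> 0.
Proof.
  intros [a [t [t' [Htt' [Ht't [Hrel Hncomm]]]]]]. exists a. intros m0 Hm0 Hm0a.
  destruct (epsilon_smallest (fun m => 1 <= m /\ gpow a m = 0)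
              (fun m => excluded_middle_informative _) (ex_intro _ m0 (conj Hm0 Hm0a)))
    as [m [[Hm1 Hm] Hmin]].
  (* If m = 2p then a^(3p) = t a^(2p) t' = 1 gives a^p = 1; if m = 2p + 1 then
     t a t' = t a^(2p+2) t' = a^(3p+3) commutes with a. *)
  assert (Hconj : forall k, conj_by t t' (gpow a (2 * k)) = gpow a (3 * k)).
  { intros k. rewrite !gpow_mul, conj_by_gpow by assumption. f_equal.
    simpl. rewrite !mul_0r. exact Hrel. }
  destruct (Nat.Even_or_Odd m) as [[p Hp]|[p Hp]].
  - assert (Hp0 : gpow a p = 0).
    { rewrite <- (mul_0l (gpow a p)), <- Hm at 1. rewrite Hp, <- gpow_add.
      replace (2 * p + p) with (3 * p) by lia.
      rewrite <- Hconj, <- Hp, Hm. unfold conj_by. now rewrite mul_0r. }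
    assert (Hp1 : 1 <= p) by lia. specialize (Hmin p (conj Hp1 Hp0)). lia.
  - apply Hncomm. fold (conj_by t t' a).
    replace (conj_by t t' a) with (gpow a (3 * (p + 1))).
    + rewrite <- (gpow_1 a) at 2 3. now rewrite <- !gpow_add, Nat.add_comm.
    + rewrite <- Hconj. f_equal.
      replace (2 * (p + 1)) with (m + 1) by lia. now rewrite gpow_add, Hm, mul_0l, gpow_1.
Qed.

Lemma bs_witness_not_locally_finite : bs_witness A -> ~ locally_finite A.
Proof.
  intros Hbs Hlf. destruct (bs_witness_infinite_order Hbs) as [a Ha].
  destruct (locally_finite_torsion a Hlf) as [m [Hm Hm0]]. exact (Ha m Hm Hm0).
Qed.

Lemma shear_rho_commutator x h :
  pcomp (pconj (shear h) (rho x)) (pinv (rho x)) = shear (fun b => h b - h (A (ginv x) b))%Z.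
Proof. apply perm_ext. intros [b l]. simpl. rewrite mul_ginv_cancel_l. f_equal. lia. Qed.

Lemma rho_conj_shear c d : pconj (pinv (rho c)) (shear d) = shear (fun b => d (A c b)).
Proof. apply perm_ext. intros [b l]. simpl. now rewrite mul_ginv_cancel_r. Qed.

Definition staircase (y : nat) : perm (nat * Z).
Proof.
  refine (Perm (fun w => (A (zpow y (snd w / 2)) (fst w), snd w))
               (fun w => (A (zpow y (- (snd w / 2))) (fst w), snd w)) _ _);
    intros [b l]; simpl; f_equal; rewrite <- mul_assoc, <- zpow_add;
    [rewrite Z.add_opp_diag_r|rewrite Z.add_opp_diag_l]; apply mul_0l.
Defined.

Lemma staircase_commutator y :
  pcomp (pconj (staircase y) (shear (fun _ => 2%Z))) (pinv (shear (fun _ => 2%Z))) = rho y.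
Proof.
  apply perm_ext. intros [b l]. simpl. replace (l - 2 + 2)%Z with l by lia.
  rewrite <- mul_assoc, <- zpow_add.
  replace (l / 2 + - ((l - 2) / 2))%Z with 1%Z by (Z.div_mod_to_equations; lia).
  now rewrite zpow_1.
Qed.

Definition in_orbit (x c b : nat) : Prop := exists n, c = A (zpow x n) b.

Lemma in_orbit_mul x c b : in_orbit x c (A x b) <-> in_orbit x c b.
Proof.
  split; intros [n ->].
  - exists (n + 1)%Z. now rewrite zpow_succ_r, mul_assoc.
  - exists (n - 1)%Z. now rewrite <- mul_assoc, <- zpow_succ_r, Z.sub_add.
Qed.

(* The least element of the orbit, so that it depends on the orbit only. *)
Definition orbit_rep (x b : nat) : nat :=
  proj1_sig (epsilon_smallest (fun c => in_orbit x c b) (fun c => excluded_middle_informative _)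
    (ex_intro _ b (ex_intro _ 0%Z (eq_sym (mul_0l b))))).

Lemma orbit_rep_spec x b :
  in_orbit x (orbit_rep x b) b /\ forall c, in_orbit x c b -> orbit_rep x b <= c.
Proof. unfold orbit_rep. destruct epsilon_smallest as [c Hc]. exact Hc. Qed.

Lemma orbit_rep_mul x b : orbit_rep x (A x b) = orbit_rep x b.
Proof.
  destruct (orbit_rep_spec x b) as [H1 H2], (orbit_rep_spec x (A x b)) as [H1' H2'].
  apply Nat.le_antisymm; [apply H2', in_orbit_mul|apply H2, in_orbit_mul]; assumption.
Qed.

Definition orbit_index (x b : nat) : Z :=
  epsilon (inhabits 0%Z) (fun n => A (zpow x n) (orbit_rep x b) = b).

Lemma orbit_index_spec x b : A (zpow x (orbit_index x b)) (orbit_rep x b) = b.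
Proof.
  unfold orbit_index. apply epsilon_spec.
  destruct (orbit_rep_spec x b) as [[n ->] _]. exists (- n)%Z.
  now rewrite <- mul_assoc, zpow_opp_l, mul_0l.
Qed.

Lemma orbit_index_mul x b : zpow x (orbit_index x (A x b)) = zpow x (orbit_index x b + 1).
Proof.
  apply (mul_cancel_r (orbit_rep x b)).
  rewrite <- (orbit_rep_mul x b) at 1. rewrite orbit_index_spec.
  now rewrite zpow_succ, mul_assoc, orbit_index_spec.
Qed.

Lemma zpow_eq_sub x n n' : zpow x n = zpow x n' -> zpow x (n - n') = 0.
Proof.
  intros H. rewrite <- Z.add_opp_r, zpow_add, H, <- zpow_add, Z.add_opp_diag_r.
  reflexivity.
Qed.

Lemma zpow_zero_opp x n : zpow x n = 0 -> zpow x (- n) = 0.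
Proof. intros H. now rewrite <- (mul_0r (zpow x (- n))), <- H, zpow_opp_l. Qed.

Lemma zpow_eq_infinite_order x n n' :
  (forall k, 1 <= k -> gpow x k <> 0) -> zpow x n = zpow x n' -> n = n'.
Proof.
  intros Hinf H. apply zpow_eq_sub in H.
  destruct (Z.lt_trichotomy n n') as [Hlt|[Heq|Hgt]]; [exfalso|exact Heq|exfalso].
  - apply zpow_zero_opp in H. apply (Hinf (Z.to_nat (- (n - n')))); [lia|].
    now rewrite <- zpow_of_nat, Z2Nat.id by lia.
  - apply (Hinf (Z.to_nat (n - n'))); [lia|]. now rewrite <- zpow_of_nat, Z2Nat.id by lia.
Qed.

Lemma zpow_mul_order x m q : gpow x m = 0 -> zpow x (Z.of_nat m * q) = 0.
Proof.
  intros Hm. assert (Hzm : zpow x (Z.of_nat m) = 0) by now rewrite zpow_of_nat.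
  induction q as [|q IH|q IH] using Z.peano_ind; [now rewrite Z.mul_0_r| |].
  - now rewrite Z.mul_succ_r, zpow_add, IH, Hzm, mul_0l.
  - rewrite Z.mul_pred_r, <- Z.add_opp_r, zpow_add, IH, mul_0l.
    now apply zpow_zero_opp.
Qed.

Lemma zpow_eq_finite_order x m n n' :
  1 <= m -> gpow x m = 0 -> (forall k, 1 <= k -> gpow x k = 0 -> m <= k) ->
  zpow x n = zpow x n' -> (n mod Z.of_nat m = n' mod Z.of_nat m)%Z.
Proof.
  intros Hm1 Hm Hmin H.
  assert (Hred : forall n, zpow x n = gpow x (Z.to_nat (n mod Z.of_nat m))).
  { intros k. rewrite (Z.div_mod k (Z.of_nat m)) at 1 by lia.
    rewrite zpow_add, zpow_mul_order, mul_0l by exact Hm.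
    rewrite <- zpow_of_nat, Z2Nat.id; [reflexivity|]. apply Z.mod_pos_bound. lia. }
  rewrite !Hred in H.
  pose proof (Z.mod_pos_bound n (Z.of_nat m)). pose proof (Z.mod_pos_bound n' (Z.of_nat m)).
  destruct (lt_eq_lt_dec (Z.to_nat (n mod Z.of_nat m)) (Z.to_nat (n' mod Z.of_nat m)))
    as [[Hlt|Heq]|Hgt].
  - apply gpow_eq_order in H; [|exact Hlt]. apply Hmin in H; lia.
  - lia.
  - symmetry in H. apply gpow_eq_order in H; [|exact Hgt]. apply Hmin in H; lia.
Qed.

Lemma shear_two_infinite_order x :
  (forall k, 1 <= k -> gpow x k <> 0) ->
  pnormal_closure (generators rho [shear (orbit_index x)]) (rho x) (shear (fun _ => 2%Z)).
Proof.
  intros Hinf.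
  assert (Hone : pnormal_closure (generators rho [shear (orbit_index x)]) (rho x)
                   (shear (fun _ => 1%Z))).
  { replace (shear (fun _ => 1%Z))
      with (pcomp (pconj (shear (orbit_index x)) (rho x)) (pinv (rho x))).
    - apply commutator_in_pnormal_closure; [apply gen_base; right; now left|apply pnc_base].
    - rewrite shear_rho_commutator. apply shear_ext. intros b.
      rewrite <- (mul_ginv_cancel_l x b) at 1.
      rewrite (zpow_eq_infinite_order x _ _ Hinf (orbit_index_mul x _)). lia. }
  replace (shear (fun _ => 2%Z)) with (pcomp (shear (fun _ => 1%Z)) (shear (fun _ => 1%Z)))
    by (rewrite shear_pcomp; now apply shear_ext).
  now apply pnc_comp.
Qed.

Section FiniteOrder.

Variables (x m : nat).
Hypothesis order_ge2 : 2 <= m.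
Hypothesis gpow_order : gpow x m = 0.
Hypothesis order_least : forall k, 1 <= k -> gpow x k = 0 -> m <= k.

Definition orbit_residue (b : nat) : Z := (orbit_index x b mod Z.of_nat m)%Z.

Lemma orbit_residue_bound b : (0 <= orbit_residue b < Z.of_nat m)%Z.
Proof. apply Z.mod_pos_bound. lia. Qed.

Lemma orbit_residue_mul b : orbit_residue (A x b) = ((orbit_residue b + 1) mod Z.of_nat m)%Z.
Proof.
  unfold orbit_residue. rewrite Z.add_mod_idemp_l by lia.
  apply (zpow_eq_finite_order x m); [lia|assumption..|apply orbit_index_mul].
Qed.

Lemma orbit_residue_gpow j b :
  orbit_residue (A (gpow x j) b) = ((orbit_residue b + Z.of_nat j) mod Z.of_nat m)%Z.
Proof.
  induction j as [|j IH]; simpl gpow.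
  - rewrite mul_0l, Z.add_0_r. symmetry. apply Z.mod_small, orbit_residue_bound.
  - rewrite mul_assoc, orbit_residue_mul, IH, Z.add_mod_idemp_l by lia. f_equal. lia.
Qed.

Definition residue_start (b : nat) : Z := if (orbit_residue b =? 0)%Z then 1 else 0.

Definition residue_window (b : nat) : Z := if (orbit_residue b <=? 1)%Z then 1 else 0.

Definition residue_generators : list (perm (nat * Z)) :=
  [shear residue_start; sign_flip (fun b => orbit_residue b =? 1)%Z].

(* The commutator of [rho x] with the shear by [residue_start] shears by +1 at residue 0
   and by -1 at residue 1; flipping the sign of the level at residue 1 makes both +1. *)
Lemma shear_window_in_normal_closure :
  pnormal_closure (generators rho residue_generators) (rho x) (shear residue_window).
Proof.
  replace (shear residue_window)
    with (pconj (sign_flip (fun b => orbit_residue b =? 1)%Z)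
            (pcomp (pconj (shear residue_start) (rho x)) (pinv (rho x)))).
  - apply pnc_conj; [apply gen_base; right; right; now left|].
    apply commutator_in_pnormal_closure; [apply gen_base; right; now left|apply pnc_base].
  - rewrite shear_rho_commutator, sign_flip_conj_shear. apply shear_ext. intros b.
    set (b' := A (ginv x) b).
    assert (Hb : orbit_residue b = ((orbit_residue b' + 1) mod Z.of_nat m)%Z).
    { rewrite <- orbit_residue_mul. unfold b'. now rewrite mul_ginv_cancel_l. }
    unfold residue_window, residue_start. rewrite Hb.
    pose proof (orbit_residue_bound b').
    destruct (Z.eq_dec (orbit_residue b' + 1) (Z.of_nat m)) as [Hwrap|Hnowrap].
    + rewrite Hwrap, Z_mod_same_full. destruct (Z.eqb_spec (orbit_residue b') 0); simpl; lia.
    + rewrite Z.mod_small by lia.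
      repeat match goal with |- context [(?a =? ?b)%Z] => destruct (Z.eqb_spec a b) end;
        repeat match goal with |- context [(?a <=? ?b)%Z] => destruct (Z.leb_spec a b) end;
        lia.
Qed.

Lemma residue_window_orbit_sum b : zsum (fun j => residue_window (A (gpow x j) b)) m = 2%Z.
Proof.
  unfold residue_window.
  rewrite (zsum_ext _ (fun j =>
             if ((orbit_residue b + Z.of_nat j) mod Z.of_nat m <=? 1)%Z then 1%Z else 0%Z))
    by (intros j _; now rewrite orbit_residue_gpow).
  apply indicator_window_sum; [lia|apply orbit_residue_bound].
Qed.

Lemma shear_two_finite_order :
  pnormal_closure (generators rho residue_generators) (rho x) (shear (fun _ => 2%Z)).
Proof.
  assert (Hsum : forall J, pnormal_closure (generators rho residue_generators) (rho x)
                   (shear (fun b => zsum (fun j => residue_window (A (gpow x j) b)) J))).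
  { induction J as [|J IH]; simpl zsum.
    - rewrite shear_zero. apply pnc_id.
    - rewrite <- shear_pcomp. apply pnc_comp; [exact IH|].
      rewrite <- rho_conj_shear. apply pnc_conj; [|apply shear_window_in_normal_closure].
      apply gen_inv, gen_base. left. eauto. }
  rewrite (shear_ext _ _ (fun b => eq_sym (residue_window_orbit_sum b))). apply Hsum.
Qed.

End FiniteOrder.

Lemma shear_two_in_normal_closure x : x <> 0 ->
  exists E, pnormal_closure (generators rho E) (rho x) (shear (fun _ => 2%Z)).
Proof.
  intros Hx. destruct (classic (exists k, 1 <= k /\ gpow x k = 0)) as [Hfin|Hinf].
  - destruct (epsilon_smallest _ (fun k => excluded_middle_informative _) Hfin)
      as [m [[Hm1 Hm] Hmin]].
    assert (Hm2 : 2 <= m).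
    { destruct (Nat.eq_dec m 1) as [->|]; [|lia]. now rewrite gpow_1 in Hm. }
    exists (residue_generators x m).
    apply shear_two_finite_order; [exact Hm2|exact Hm|intros k Hk1 Hk; now apply Hmin].
  - exists [shear (orbit_index x)]. apply shear_two_infinite_order.
    intros k Hk Hk0. apply Hinf. eauto.
Qed.

Lemma rho_in_normal_closure x y : x <> 0 ->
  exists E : list (perm (nat * Z)), pnormal_closure (generators rho E) (rho x) (rho y).
Proof.
  intros Hx. destruct (shear_two_in_normal_closure x Hx) as [E HE].
  exists (E ++ [staircase y]). rewrite <- (staircase_commutator y).
  apply commutator_in_pnormal_closure.
  - apply gen_base. right. apply in_or_app. right. now left.
  - refine (pnormal_closure_mono _ _ _ _ _ _ HE). intros q [Hq|Hq]; [now left|].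
    right. apply in_or_app. now left.
Qed.

End GroupTable.

Lemma dense_of_approximations (D : table -> Prop) :
  (forall A n, is_group_table A -> exists B, is_group_table B /\ agree_upto n A B /\ D B) ->
  dense_in_G D.
Proof.
  intros H U HU [A [HA HUA]]. destruct (HU A HUA) as [n Hn].
  destruct (H A n HA) as [B [HB [Hagree HD]]]. exists B. auto.
Qed.

Definition lift {Y} (q : perm Y) : perm (nat * Y).
Proof.
  refine (Perm (fun w => (fst w, q (snd w))) (fun w => (fst w, bwd q (snd w))) _ _);
    intros [b y]; simpl; f_equal; [apply fwd_bwd|apply bwd_fwd].
Defined.

Lemma rho_lift_comm A HA {Y} a (q : perm Y) :
  pcomp (rho A HA a) (lift q) = pcomp (lift q) (rho A HA a).
Proof. now apply perm_ext. Qed.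

Definition transposition (i j k : nat) : nat :=
  if k =? i then j else if k =? j then i else k.

Lemma transposition_involutive i j k : transposition i j (transposition i j k) = k.
Proof.
  unfold transposition. destruct (Nat.eqb_spec k i), (Nat.eqb_spec k j); cbv iota;
    repeat match goal with |- context [?a =? ?b] => destruct (Nat.eqb_spec a b); cbv iota end;
    lia.
Qed.

Definition transposition_perm (i j : nat) : perm nat :=
  Perm (transposition i j) (transposition i j)
    (transposition_involutive i j) (transposition_involutive i j).

Lemma noncommuting_centralizer_dense s : dense_in_G (noncommuting_centralizer s).
Proof.
  apply dense_of_approximations. intros A n HA.
  set (sigma := lift (transposition_perm 0 1)). set (tau := lift (transposition_perm 1 2)).
  destruct (extend_by_perms A (rho A HA) [sigma; tau] n (S (list_max s))
              (rho_hom A HA) (rho_injective A HA 0) (rho_0 A HA))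
    as [B [beta [HB [Hagree [Hhom [Hinj [Honto [_ Hrho]]]]]]]].
  destruct (Honto sigma) as [g Hg]; [apply gen_base; right; now left|].
  destruct (Honto tau) as [h Hh]; [apply gen_base; right; right; now left|].
  exists B. split; [exact HB|split; [exact Hagree|]]. exists g, h. split.
  - intros a Ha. pose proof (le_list_max a s Ha).
    split; apply Hinj; rewrite !Hhom, ?Hg, ?Hh, Hrho by lia; symmetry; apply rho_lift_comm.
  - intros E. apply (f_equal (fun i => fwd (beta i) (0, 0))) in E.
    rewrite !Hhom, Hg, Hh in E. discriminate E.
Qed.

Definition bs_shift : perm (Z * Z).
Proof.
  refine (Perm (fun w : Z * Z => (fst w + 1, snd w)%Z) (fun w : Z * Z => (fst w - 1, snd w)%Z) _ _);
    intros [z k]; simpl; f_equal; lia.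
Defined.

(* Writing z = 2q + r, the pair (r, k) is re-split as 2k + r = 3k' + r' and z is sent to
   3q + r'; so the conjugator maps the z-blocks of length 2 onto those of length 3, which
   conjugates the double shift onto the triple shift. *)
Definition bs_conjugator : perm (Z * Z).
Proof.
  refine (Perm
    (fun w : Z * Z => let (z, k) := w in
              (3 * (z / 2) + (2 * k + z mod 2) mod 3, (2 * k + z mod 2) / 3)%Z)
    (fun w : Z * Z => let (z, k) := w in
              (2 * (z / 3) + (3 * k + z mod 3) mod 2, (3 * k + z mod 3) / 2)%Z) _ _);
    intros [z k]; cbv beta iota zeta; f_equal; Z.div_mod_to_equations; lia.
Defined.

Lemma bs_conjugator_relation w :
  bs_conjugator (bs_shift (bs_shift (bwd bs_conjugator w))) = bs_shift (bs_shift (bs_shift w)).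
Proof.
  destruct w as [z k]. cbn [fwd bwd bs_conjugator bs_shift fst snd]. cbv beta iota zeta.
  f_equal; Z.div_mod_to_equations; lia.
Qed.

Lemma bs_witness_dense : dense_in_G bs_witness.
Proof.
  apply dense_of_approximations. intros A n HA.
  set (alpha := lift bs_shift). set (tau := lift bs_conjugator).
  destruct (extend_by_perms A (rho A HA) [alpha; tau] n 1
              (rho_hom A HA) (rho_injective A HA (0, 0)%Z) (rho_0 A HA))
    as [B [beta [HB [Hagree [Hhom [Hinj [Honto [_ Hrho]]]]]]]].
  assert (Hb0 : beta 0 = pid) by (rewrite Hrho by lia; apply rho_0).
  assert (Halpha : perm_gen (generators (rho A HA) [alpha; tau]) alpha)
    by (apply gen_base; right; now left).
  assert (Htau : perm_gen (generators (rho A HA) [alpha; tau]) tau)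
    by (apply gen_base; right; right; now left).
  destruct (Honto _ Halpha) as [a Ha].
  destruct (Honto _ Htau) as [t Ht].
  destruct (Honto _ (gen_inv _ Htau)) as [t' Ht'].
  exists B. split; [exact HB|split; [exact Hagree|]]. exists a, t, t'. repeat split.
  - apply Hinj. rewrite Hhom, Ht, Ht', Hb0. apply pcomp_pinv_r.
  - apply Hinj. rewrite Hhom, Ht, Ht', Hb0. apply pcomp_pinv_l.
  - apply Hinj. rewrite !Hhom, Ht, Ht', Ha. apply perm_ext. intros [b w].
    simpl. f_equal. apply bs_conjugator_relation.
  - intros E. apply (f_equal (fun i => fwd (beta i) (0, (0, 0)%Z))) in E.
    rewrite !Hhom, Ht, Ht', Ha in E. vm_compute in E. discriminate E.
Qed.

Lemma trivial_or_normally_generates_dense x y : dense_in_G (trivial_or_normally_generates x y).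
Proof.
  apply dense_of_approximations. intros A n HA.
  destruct (Nat.eq_dec x 0) as [Hx|Hx].
  { exists A. split; [exact HA|split; [now intros i j _ _|now left]]. }
  destruct (rho_in_normal_closure A HA x y Hx) as [E HE].
  destruct (extend_by_perms A (rho A HA) E n (S (x + y))
              (rho_hom A HA) (rho_injective A HA 0%Z) (rho_0 A HA))
    as [B [beta [HB [Hagree [Hhom [Hinj [Honto [Hin Hrho]]]]]]]].
  exists B. split; [exact HB|split; [exact Hagree|right]].
  assert (Hb0 : beta 0 = pid) by (rewrite Hrho by lia; apply rho_0).
  apply (pnormal_closure_pullback B beta (generators (rho A HA) E) x Hhom Hinj Hb0 Honto (Hin x)
           (rho A HA y)).
  - now rewrite Hrho by lia.
  - apply Hrho. lia.
Qed.

(* decode_list is onto, and decode_list 0 = [] selects bs_witness. *)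
Definition generic_family (k : nat) : table -> Prop :=
  match decode_list k with
  | 0 :: s => noncommuting_centralizer s
  | [1; x; y] => trivial_or_normally_generates x y
  | _ => bs_witness
  end.

Lemma generic_family_cases k :
  (exists s, generic_family k = noncommuting_centralizer s) \/
  (exists x y, generic_family k = trivial_or_normally_generates x y) \/
  generic_family k = bs_witness.
Proof.
  unfold generic_family.
  destruct (decode_list k) as [|[|[|c]] [|x [|y [|z l]]]]; eauto.
Qed.

Lemma generic_family_open k : is_open (generic_family k).
Proof.
  destruct (generic_family_cases k) as [[s ->]|[[x [y ->]]| ->]];
    auto using noncommuting_centralizer_open, trivial_or_normally_generates_open, bs_witness_open.
Qed.

Lemma generic_family_dense k : dense_in_G (generic_family k).
Proof.
  destruct (generic_family_cases k) as [[s ->]|[[x [y ->]]| ->]];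
    auto using noncommuting_centralizer_dense, trivial_or_normally_generates_dense,
      bs_witness_dense.
Qed.

Theorem corollary6p3 :
  comeager_in_G
    (fun A => simple_group A /\ ~ finitely_generated A /\ ~ locally_finite A).
Proof.
  exists generic_family. split; [|split].
  - intros k. exists (generic_family k). split; [apply generic_family_open|tauto].
  - apply generic_family_dense.
  - intros A HA Hgeneric. split; [|split].
    + apply simple_of_normal_closures. intros x y.
      destruct (decode_list_onto [1; x; y]) as [k Hk].
      specialize (Hgeneric k). unfold generic_family in Hgeneric. now rewrite Hk in Hgeneric.
    + intros [s Hs]. destruct (decode_list_onto (0 :: s)) as [k Hk].
      specialize (Hgeneric k). unfold generic_family in Hgeneric. rewrite Hk in Hgeneric.
      exact (noncommuting_centralizer_not_generated A HA s Hgeneric Hs).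
    + exact (bs_witness_not_locally_finite A HA (Hgeneric 0)).
Qed.
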